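(* There exist a constant $C_A>0$ and a seminorm $\|\cdot\|_{M^i_A(p_0)}$ on $\mathbb R^K$ whose kernel $\{s:\|s\|_{M^i_A(p_0)}=0\}$ is exactly the indifference kernel $M^i_A(p_0)$, such that for every information structure $\mathbf q$, $$C_A\,\mathbb E\|\mathbf q-p_0\|\ \ge\ \mathrm{VoI}_A(\mathbf q)\ \ge\ \mathrm{VoI}_{A^\star(p_0)}(\mathbf q)\ \ge\ \mathbb E\|\mathbf q-p_0\|_{M^i_A(p_0)}.$$
   Context: Let $K$ be a finite set of states of nature. Signed measures on $K$ are identified with $\mathbb R^K$, with scalar product $\langle s,v\rangle=\sum_{k\in K}s_kv_k$ and Euclidean norm $\|\cdot\|$. Let $\Delta\subset\mathbb R^K$ be the simplex of probability distributions on $K$, and fix a prior $p_0\in\Delta$ with full support. The action set $A\subset\mathbb R^K$ is a nonempty compact convex set (the closed convex hull of the payoff vectors $(g(d,k))_{k\in K}$, $d\in D$, of a decision problem with compact $D$ and continuous $g$). For a nonempty compact convex $B\subset\mathbb R^K$, the value function is $v_B(p)=\max_{b\in B}\langle p,b\rangle$ for $p\in\Delta$, and the value of information of an information structure $\mathbf q$ is $\mathrm{VoI}_B(\mathbf q)=\mathbb E[v_B(\mathbf q)]-v_B(p_0)$. For $p\in\Delta$, $A^\star(p)=\{a\in A:\langle p,a'\rangle\le\langle p,a\rangle\ \forall a'\in A\}$ (a nonempty compact convex set). The indifference kernel at $p_0$ is the vector subspace $M^i_A(p_0)=[A^\star(p_0)-A^\star(p_0)]^\perp=\{s\in\mathbb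 R^K:\langle s,a\rangle=\langle s,a'\rangle\ \forall a,a'\in A^\star(p_0)\}$. An information structure is a random variable $\mathbf q$ on a probability space $(\Omega,\mathcal F,\mathbb P)$ with values in $\Delta$ and $\mathbb E[\mathbf q]=p_0$. *)

From mathcomp Require Import all_boot.
From Stdlib Require Import Reals ClassicalEpsilon.
Open Scope R_scope.

Definition vecK (K : finType) := K -> R.

Definition sumK {K : finType} (f : K -> R) : R :=
  foldr (fun k acc => f k + acc) 0 (enum K).

Definition dot {K : finType} (s v : vecK K) : R := sumK (fun k => s k * v k).
Definition norm {K : finType} (s : vecK K) : R := sqrt (dot s s).
Definition vsub {K : finType} (s v : vecK K) : vecK K := fun k => s k - v k.
Definition vadd {K : finType} (s v : vecK K) : vecK K := fun k => s k + v k.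
Definition vscale {K : finType} (c : R) (s : vecK K) : vecK K := fun k => c * s k.

Definition in_simplex {K : finType} (p : vecK K) : Prop :=
  (forall k, 0 <= p k) /\ sumK p = 1.

Definition full_support {K : finType} (p : vecK K) : Prop := forall k, 0 < p k.

(* nonempty compact convex subsets of R^K (compact = closed and bounded) *)
Definition nonempty {K : finType} (A : vecK K -> Prop) : Prop := exists a, A a.
Definition convex {K : finType} (A : vecK K -> Prop) : Prop :=
  forall a b t, A a -> A b -> 0 <= t <= 1 ->
    A (fun k => t * a k + (1 - t) * b k).
Definition closed_set {K : finType} (A : vecK K -> Prop) : Prop :=
  forall (u : nat -> vecK K) (a : vecK K),
    (forall m, A (u m)) -> (forall k, Un_cv (fun m => u m k) (a k)) -> A a.
Definition bounded_set {K : finType} (A : vecK K -> Prop) : Prop :=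
  exists M, forall a, A a -> norm a <= M.
Definition compact_convex {K : finType} (A : vecK K -> Prop) : Prop :=
  nonempty A /\ closed_set A /\ bounded_set A /\ convex A.

(* value function v_B(p) = max_{b in B} <p,b> (the maximum exists for B
   nonempty compact; it is selected by Hilbert's epsilon) *)
Definition value {K : finType} (B : vecK K -> Prop) (p : vecK K) : R :=
  epsilon (inhabits 0)
    (fun v => (exists b, B b /\ dot p b = v) /\ (forall b, B b -> dot p b <= v)).

Definition Astar {K : finType} (A : vecK K -> Prop) (p : vecK K) : vecK K -> Prop :=
  fun a => A a /\ forall a', A a' -> dot p a' <= dot p a.

Definition indiff_kernel {K : finType} (A : vecK K -> Prop) (p0 : vecK K) :
  vecK K -> Prop :=
  fun s => forall a a', Astar A p0 a -> Astar A p0 a' -> dot s a = dot s a'.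

Definition seminorm {K : finType} (N : vecK K -> R) : Prop :=
  (forall s t, N (vadd s t) <= N s + N t) /\
  (forall c s, N (vscale c s) = Rabs c * N s).

(* Probability spaces: a sample type Omega with an expectation operator E,
   required to be a normalized positive linear functional on bounded
   real random variables. *)
Definition bounded_rv {Omega : Type} (f : Omega -> R) : Prop :=
  exists M, forall w, Rabs (f w) <= M.

Definition expectation {Omega : Type} (E : (Omega -> R) -> R) : Prop :=
  (forall f g, bounded_rv f -> bounded_rv g ->
     E (fun w => f w + g w) = E f + E g) /\
  (forall c f, bounded_rv f -> E (fun w => c * f w) = c * E f) /\
  (forall f g, bounded_rv f -> bounded_rv g ->
     (forall w, f w <= g w) -> E f <= E g) /\
  E (fun _ => 1) = 1.

Definition info_structure {K : finType} {Omega : Type} (E : (Omega -> R) -> R)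
  (p0 : vecK K) (q : Omega -> vecK K) : Prop :=
  (forall w, in_simplex (q w)) /\ (forall k, E (fun w => q w k) = p0 k).

Definition VoI {K : finType} {Omega : Type} (E : (Omega -> R) -> R)
  (B : vecK K -> Prop) (p0 : vecK K) (q : Omega -> vecK K) : R :=
  E (fun w => value B (q w)) - value B p0.

(* If every action has norm at most M, the value function v_A
     is (#|K| M)-Lipschitz, so VoI_A(q) <= #|K| M E||q - p0||.
   - Middle inequality.  A* is a compact convex subset of A with
     v_A*(p0) = v_A(p0), and v_A* <= v_A pointwise.
   - Lower bound.  Finitely many points a1 :: F of A* determine A*: a
     functional constant on them is constant on A* (the span of the
     differences a - a1 has rank at most #|K|).  Half the mean absolute
     deviation N of <s,a> over these points is a seminorm with kernel exactly
     M^i_A(p0), and for every belief q the mean of <q,a> plus N(q) is at most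
     their maximum, hence at most v_A*(q).  Taking expectations, Bayes
     plausibility turns the mean into v_A*(p0). *)

From mathcomp Require Import all_boot all_algebra.
From mathcomp Require Import Rstruct.
From Stdlib Require Import Reals Lra Lia List.
From Stdlib Require Import Classical FunctionalExtensionality ClassicalEpsilon.
Open Scope R_scope.

Definition lsum {T : Type} (f : T -> R) (l : list T) : R :=
  foldr (fun a acc => f a + acc) 0 l.

Section ListSums.
Context {T : Type}.
Implicit Types (f g : T -> R) (l : list T).

Lemma lsum_plus f g l : lsum (fun a => f a + g a) l = lsum f l + lsum g l.
Proof. by elim: l => /= [|x l IH]; rewrite ?IH; lra. Qed.

Lemma lsum_minus f g l : lsum (fun a => f a - g a) l = lsum f l - lsum g l.
Proof. by elim: l => /= [|x l IH]; rewrite ?IH; lra. Qed.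

Lemma lsum_scal c f l : lsum (fun a => c * f a) l = c * lsum f l.
Proof. by elim: l => /= [|x l IH]; rewrite ?IH; lra. Qed.

Lemma lsum_const d l : lsum (fun _ => d) l = INR (size l) * d.
Proof.
elim: l => [|x l IH]; first by rewrite /=; lra.
by rewrite [size _]/= S_INR /= IH; lra.
Qed.

Lemma lsum_eq f g l : (forall a, In a l -> f a = g a) -> lsum f l = lsum g l.
Proof.
elim: l => //= x l IH H; rewrite (H x (or_introl erefl)) IH // => a ha.
exact: H a (or_intror ha).
Qed.

Lemma lsum_le f g l : (forall a, In a l -> f a <= g a) -> lsum f l <= lsum g l.
Proof.
elim: l => /= [|x l IH] H; first lra.
have := H x (or_introl erefl); have := IH (fun a ha => H a (or_intror ha)); lra.
Qed.

Lemma lsum_nonneg f l : (forall a, In a l -> 0 <= f a) -> 0 <= lsum f l.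
Proof.
move=> H; have := lsum_le (fun _ => 0) f l H; rewrite lsum_const; lra.
Qed.

Lemma lsum_term f l x : (forall a, In a l -> 0 <= f a) -> In x l -> f x <= lsum f l.
Proof.
elim: l => //= y l IH H [<-|hx].
- have := lsum_nonneg f l (fun a ha => H a (or_intror ha)); lra.
- have := H y (or_introl erefl); have := IH (fun a ha => H a (or_intror ha)) hx; lra.
Qed.

Lemma lsum_abs f l : Rabs (lsum f l) <= lsum (fun a => Rabs (f a)) l.
Proof.
elim: l => /= [|x l IH]; first by rewrite Rabs_R0; lra.
by apply: Rle_trans (Rabs_triang _ _) _; lra.
Qed.

Lemma lsum_eq0 f l : (forall a, In a l -> 0 <= f a) -> lsum f l = 0 ->
  forall a, In a l -> f a = 0.
Proof.
move=> H S0 a ha; have := lsum_term f l a H ha; have := H a ha; lra.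
Qed.
End ListSums.

Lemma sumKE (K : finType) (f : K -> R) : sumK f = lsum f (enum K).
Proof. by []. Qed.

Lemma In_enum {K : finType} (k : K) : In k (enum K).
Proof.
have : k \in enum K by rewrite mem_enum.
by elim: (enum K) => //= x l IH; rewrite inE => /orP [/eqP ->|/IH]; [left|right].
Qed.

Lemma cv_const (c : R) : Un_cv (fun _ => c) c.
Proof. by move=> e he; exists 0%nat => n _; rewrite /Rdist Rminus_diag Rabs_R0. Qed.

Section Vectors.
Context {K : finType}.
Implicit Types (s t a b p : vecK K).

Lemma dotE s t : dot s t = lsum (fun k => s k * t k) (enum K).
Proof. by []. Qed.

Lemma dot_vsub_l a b s : dot (vsub a b) s = dot a s - dot b s.
Proof. rewrite !dotE -lsum_minus; apply: lsum_eq => k _; rewrite /vsub; ring. Qed.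

Lemma dot_vsub_r s a b : dot s (vsub a b) = dot s a - dot s b.
Proof. rewrite !dotE -lsum_minus; apply: lsum_eq => k _; rewrite /vsub; ring. Qed.

Lemma dot_vadd_l a b s : dot (vadd a b) s = dot a s + dot b s.
Proof. rewrite !dotE -lsum_plus; apply: lsum_eq => k _; rewrite /vadd; ring. Qed.

Lemma dot_vscale_l c a s : dot (vscale c a) s = c * dot a s.
Proof. rewrite !dotE -lsum_scal; apply: lsum_eq => k _; rewrite /vscale; ring. Qed.

Lemma dot_comb p a b (r : R) :
  dot p (fun k => r * a k + (1 - r) * b k) = r * dot p a + (1 - r) * dot p b.
Proof. rewrite !dotE -!lsum_scal -lsum_plus; apply: lsum_eq => k _; ring. Qed.

Lemma dot_self_nonneg s : 0 <= dot s s.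
Proof. by apply: lsum_nonneg => k _; nra. Qed.

Lemma norm_nonneg s : 0 <= norm s.
Proof. exact: sqrt_pos. Qed.

Lemma coord_sq_le s k : s k * s k <= dot s s.
Proof. by apply: (lsum_term (fun k => s k * s k)) => [j _|]; [nra | exact: In_enum]. Qed.

Lemma coord_le_norm s k : Rabs (s k) <= norm s.
Proof.
rewrite /norm -sqrt_Rsqr_abs; apply: sqrt_le_1_alt; exact: coord_sq_le.
Qed.

Lemma dot_self_le s M : norm s <= M -> dot s s <= M * M.
Proof.
move=> H; rewrite -(sqrt_sqrt (dot s s) (dot_self_nonneg s)).
have := norm_nonneg s; rewrite /norm in H *; nra.
Qed.

Lemma dot_abs_bound s t al be : (forall k, Rabs (s k) <= al) ->
  (forall k, Rabs (t k) <= be) -> Rabs (dot s t) <= INR #|K| * (al * be).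
Proof.
move=> Hs Ht; rewrite cardE -lsum_const dotE.
apply: Rle_trans (lsum_abs _ _) _; apply: lsum_le => k _; rewrite Rabs_mult.
by apply: Rmult_le_compat; [apply: Rabs_pos|apply: Rabs_pos|apply: Hs|apply: Ht].
Qed.

Lemma parallelogram s t :
  dot (vsub s t) (vsub s t) = 2 * dot s s + 2 * dot t t
    - 4 * dot (fun k => / 2 * s k + (1 - / 2) * t k) (fun k => / 2 * s k + (1 - / 2) * t k).
Proof.
rewrite !dotE -!lsum_scal -lsum_plus -lsum_minus.
by apply: lsum_eq => k _; rewrite /vsub; field.
Qed.

Lemma dot_cv p (u : nat -> vecK K) a : (forall k, Un_cv (fun n => u n k) (a k)) ->
  Un_cv (fun n => dot p (u n)) (dot p a).
Proof.
move=> H; rewrite /dot /sumK; elim: (enum K) => /= [|x l IH]; first exact: cv_const.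
by apply: CV_plus => //; apply: CV_mult => //; exact: cv_const.
Qed.
End Vectors.

Section Expectation.
Context {Omega : Type}.
Implicit Types (f g : Omega -> R).

Lemma bounded_const c : bounded_rv (fun _ : Omega => c).
Proof. by exists (Rabs c) => w; lra. Qed.

Lemma bounded_plus f g : bounded_rv f -> bounded_rv g -> bounded_rv (fun w => f w + g w).
Proof.
move=> [M1 H1] [M2 H2]; exists (M1 + M2) => w.
by apply: Rle_trans (Rabs_triang _ _) _; have := H1 w; have := H2 w; lra.
Qed.

Lemma bounded_scal c f : bounded_rv f -> bounded_rv (fun w => c * f w).
Proof.
move=> [M H]; exists (Rabs c * M) => w; rewrite Rabs_mult.
by apply: Rmult_le_compat_l; [apply: Rabs_pos | apply: H].
Qed.

Lemma bounded_minus f g : bounded_rv f -> bounded_rv g -> bounded_rv (fun w => f w - g w).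
Proof.
move=> [M1 H1] [M2 H2]; exists (M1 + M2) => w.
by apply: Rle_trans (Rabs_triang _ _) _; rewrite Rabs_Ropp; have := H1 w; have := H2 w; lra.
Qed.

Lemma bounded_abs f : bounded_rv f -> bounded_rv (fun w => Rabs (f w)).
Proof. by move=> [M H]; exists M => w; rewrite Rabs_Rabsolu. Qed.

Lemma bounded_lsum {T : Type} (g : Omega -> T -> R) l :
  (forall a, bounded_rv (fun w => g w a)) -> bounded_rv (fun w => lsum (g w) l).
Proof.
move=> H; elim: l => [|x l IH]; first exact: bounded_const.
exact: (bounded_plus _ _ (H x) IH).
Qed.

Context {E : (Omega -> R) -> R} (HE : expectation E).

Lemma E_plus f g : bounded_rv f -> bounded_rv g -> E (fun w => f w + g w) = E f + E g.
Proof. by case: HE => h _; apply: h. Qed.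

Lemma E_scal c f : bounded_rv f -> E (fun w => c * f w) = c * E f.
Proof. by case: HE => _ [h _]; apply: h. Qed.

Lemma E_le f g : bounded_rv f -> bounded_rv g -> (forall w, f w <= g w) -> E f <= E g.
Proof. by case: HE => _ [_ [h _]]; apply: h. Qed.

Lemma E_const c : E (fun _ => c) = c.
Proof.
have [_ [_ [_ E1]]] := HE.
have -> : (fun _ : Omega => c) = (fun _ => c * 1).
  by apply: functional_extensionality => w; ring.
by rewrite E_scal ?E1; [ring | exact: bounded_const].
Qed.

Lemma E_nonneg f : bounded_rv f -> (forall w, 0 <= f w) -> 0 <= E f.
Proof. by move=> hf f_ge0; rewrite -(E_const 0); apply: E_le => //; exact: bounded_const. Qed.

Lemma E_lsum {T : Type} (g : Omega -> T -> R) l : (forall a, bounded_rv (fun w => g w a)) ->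
  E (fun w => lsum (g w) l) = lsum (fun a => E (fun w => g w a)) l.
Proof.
move=> H; elim: l => [|x l IH]; first exact: E_const.
by rewrite /= -IH E_plus //; exact: bounded_lsum.
Qed.
End Expectation.

Lemma sup_approx {X : Type} (P : X -> Prop) (f : X -> R) :
  (exists x, P x) -> (exists b, forall x, P x -> f x <= b) ->
  exists S, (forall x, P x -> f x <= S) /\
            forall e, 0 < e -> exists x, P x /\ S - e < f x.
Proof.
move=> [x0 Px0] [b Hb].
have [S [ub lub]] : {S | is_lub (fun y => exists x, P x /\ y = f x) S}.
  apply: completeness; last by exists (f x0), x0.
  by exists b => _ [x [Px ->]]; exact: Hb.
exists S; split=> [x Px|e he]; first by apply: ub; exists x.
apply: NNPP => C; suff : S <= S - e by lra.
apply: lub => _ [x [Px ->]]; apply: Rnot_lt_le => h; apply: C; by exists x.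
Qed.

Lemma inf_approx {X : Type} (P : X -> Prop) (f : X -> R) :
  (exists x, P x) -> (exists b, forall x, P x -> b <= f x) ->
  exists d, (forall x, P x -> d <= f x) /\
            forall e, 0 < e -> exists x, P x /\ f x < d + e.
Proof.
move=> ne [b Hb].
have [S [HS1 HS2]] : exists S, (forall x, P x -> - f x <= S) /\
    forall e, 0 < e -> exists x, P x /\ S - e < - f x.
  by apply: sup_approx => //; exists (- b) => x Px; have := Hb x Px; lra.
exists (- S); split=> [x Px|e he]; first by have := HS1 x Px; lra.
by have [x [Px h]] := HS2 e he; exists x; split=> //; lra.
Qed.

Definition en (n : nat) : R := / (INR n + 1).

Lemma en_pos n : 0 < en n.
Proof. exact: RinvN_pos. Qed.

Lemma en_anti n m : (n <= m)%coq_nat -> en m <= en n.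
Proof.
move=> H; rewrite /en; apply: Rinv_le_contravar; first by have := pos_INR n; lra.
by have := le_INR _ _ H; lra.
Qed.

Lemma en_cv : Un_cv en 0.
Proof. exact: RinvN_cv. Qed.

(* Points of a decreasing sequence of bounded convex sets whose squared norms
   are nearly minimal form a Cauchy sequence: by the parallelogram identity
   two such points are close once the infima of the squared norms stabilize. *)
Section NearlyMinimalNorms.
Context {K : finType}.
Variable T : nat -> vecK K -> Prop.
Hypothesis T_nonempty : forall n, exists a, T n a.
Hypothesis T_decreasing : forall n m a, (n <= m)%coq_nat -> T m a -> T n a.
Hypothesis T_midpoint : forall n a b, T n a -> T n b ->
  T n (fun k => / 2 * a k + (1 - / 2) * b k).
Hypothesis T_bounded : exists M, forall a, T 0 a -> dot a a <= M.

Lemma nested_convex_cauchy :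
  exists a : nat -> vecK K, (forall n, T n (a n)) /\ forall k, Cauchy_crit (fun n => a n k).
Proof.
have inf_sq_norm n : exists x, (forall a, T n a -> x <= dot a a) /\
    forall e, 0 < e -> exists a, T n a /\ dot a a < x + e.
  apply: inf_approx; first exact: T_nonempty.
  by exists 0 => a _; exact: dot_self_nonneg.
have [d Hd] := choice _ inf_sq_norm.
have d_mono n m : (n <= m)%coq_nat -> d n <= d m.
  move=> nm; apply: Rnot_lt_le => lt.
  have [a [Ta Ha]] := (Hd m).2 (d n - d m) ltac:(lra).
  by have := (Hd n).1 a (T_decreasing _ _ _ nm Ta); lra.
have [D [d_le_D D_approx]] : exists D, (forall n, True -> d n <= D) /\
    forall e, 0 < e -> exists n, True /\ D - e < d n.
  apply: sup_approx; first by exists 0%nat.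
  have [M HM] := T_bounded; exists M => n _; have [a Ta] := T_nonempty n.
  by have := (Hd n).1 a Ta; have := HM a (T_decreasing 0 n a (Nat.le_0_l n) Ta); lra.
have [a Ha] := choice _ (fun n => (Hd n).2 (en n) (en_pos n)).
have dist_bound n m : (n <= m)%coq_nat ->
    dot (vsub (a n) (a m)) (vsub (a n) (a m)) <= 2 * (D - d n) + 4 * en n.
  move=> nm; rewrite parallelogram; have [Tn Hn] := Ha n; have [Tm Hm] := Ha m.
  have := (Hd n).1 _ (T_midpoint n _ _ Tn (T_decreasing _ _ _ nm Tm)).
  by have := d_le_D m I; have := en_anti _ _ nm; lra.
exists a; split=> [n|k e he]; first exact: (Ha n).1.
have [N1 [_ HN1]] := D_approx (e * e / 4) ltac:(nra).
have [N2 HN2] := en_cv (e * e / 8) ltac:(nra).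
have close n m : (Nat.max N1 N2 <= n)%coq_nat -> (n <= m)%coq_nat -> Rabs (a n k - a m k) < e.
  move=> hn nm; rewrite -(Rabs_pos_eq e); last lra.
  apply: Rsqr_lt_abs_0; rewrite /Rsqr.
  have := coord_sq_le (vsub (a n) (a m)) k.
  have := dist_bound n m nm; have := d_mono N1 n ltac:(lia).
  have := HN2 n ltac:(lia); rewrite /Rdist Rminus_0_r Rabs_pos_eq; last first.
    exact: Rlt_le (en_pos n).
  rewrite /vsub; lra.
exists (Nat.max N1 N2) => n m hn hm; rewrite /Rdist.
case: (Nat.le_ge_cases n m) => nm; first exact: close.
by rewrite Rabs_minus_sym; apply: close.
Qed.
End NearlyMinimalNorms.

(* A linear functional attains its maximum on a nonempty compact convex set.
   The maximizer is the limit of nearly-minimal-norm points of the slabs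
   [B ∩ {a | <p,a> >= sup - en n}]. *)
Lemma attain {K : finType} (B : vecK K -> Prop) (p : vecK K) : compact_convex B ->
  exists b, B b /\ forall b', B b' -> dot p b' <= dot p b.
Proof.
case=> [[a0 Ba0] [B_closed [[M B_bounded] B_convex]]].
have [S [S_ub S_approx]] : exists S, (forall a, B a -> dot p a <= S) /\
    forall e, 0 < e -> exists a, B a /\ S - e < dot p a.
  apply: sup_approx; first by exists a0.
  exists (INR #|K| * (norm p * M)) => a Ba; apply: Rle_trans (Rle_abs _) _.
  apply: dot_abs_bound => k; first exact: coord_le_norm.
  exact: Rle_trans (coord_le_norm a k) (B_bounded a Ba).
pose T n a := B a /\ S - en n <= dot p a.
have [a [Ta a_cauchy]] : exists a : nat -> vecK K,
    (forall n, T n (a n)) /\ forall k, Cauchy_crit (fun n => a n k).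
  apply: nested_convex_cauchy.
  - move=> n; have [a [Ba Ha]] := S_approx (en n) (en_pos n).
    by exists a; split=> //; lra.
  - move=> n m a nm [Ba Ha]; split=> //; have := en_anti _ _ nm; lra.
  - move=> n a b [Ba Ha] [Bb Hb]; split; first by apply: B_convex => //; lra.
    by rewrite dot_comb; lra.
  - by exists (M * M) => a [Ba _]; apply: dot_self_le; exact: B_bounded.
have a_lim k : exists l, Un_cv (fun n => a n k) l.
  by have [l hl] := R_complete _ (a_cauchy k); exists l.
have [ast a_cv] := choice _ a_lim.
exists ast; split; first by apply: (B_closed a) => // n; exact: (Ta n).1.
move=> b Bb; apply: Rle_trans (S_ub b Bb) _.
apply: (@Rle_cv_lim (fun n => S - en n) (fun n => dot p (a n))).
- by move=> n; exact: (Ta n).2.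
- by have := CV_minus _ _ _ _ (cv_const S) en_cv; rewrite Rminus_0_r.
- exact: dot_cv.
Qed.

Section ValueFunction.
Context {K : finType}.
Implicit Types (A B : vecK K -> Prop) (p : vecK K).

Lemma value_spec B p : compact_convex B ->
  (exists b, B b /\ dot p b = value B p) /\ (forall b, B b -> dot p b <= value B p).
Proof.
move=> hB; have [b [Bb b_max]] := attain B p hB.
apply: (epsilon_spec (inhabits 0) (fun v => (exists b, B b /\ dot p b = v) /\
  (forall b, B b -> dot p b <= v))).
by exists (dot p b); split; [exists b | exact: b_max].
Qed.

Lemma value_mono B B' p : compact_convex B -> compact_convex B' ->
  (forall b, B b -> B' b) -> value B p <= value B' p.
Proof.
move=> hB hB' BB'; have [[b [Bb <-]] _] := value_spec B p hB.
exact: (value_spec B' p hB').2 b (BB' b Bb).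
Qed.

Lemma value_abs_bound B M p al : compact_convex B -> (forall b, B b -> norm b <= M) ->
  (forall k, Rabs (p k) <= al) -> Rabs (value B p) <= INR #|K| * (al * M).
Proof.
move=> hB BM pal; have [[b [Bb <-]] _] := value_spec B p hB.
by apply: dot_abs_bound => // k; exact: Rle_trans (coord_le_norm b k) (BM b Bb).
Qed.

Lemma value_lipschitz B M p p' : compact_convex B -> (forall b, B b -> norm b <= M) ->
  value B p <= value B p' + INR #|K| * M * norm (vsub p p').
Proof.
move=> hB BM; have [[b [Bb <-]] _] := value_spec B p hB.
have b_le := (value_spec B p' hB).2 b Bb.
have : Rabs (dot (vsub p p') b) <= INR #|K| * (norm (vsub p p') * M).
  apply: dot_abs_bound => k; first exact: coord_le_norm.
  exact: Rle_trans (coord_le_norm b k) (BM b Bb).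
have := Rle_abs (dot (vsub p p') b); rewrite dot_vsub_l; lra.
Qed.

Lemma Astar_dot A p0 a : compact_convex A -> Astar A p0 a -> dot p0 a = value A p0.
Proof.
move=> hA [Aa a_max]; have [[b [Ab <-]] b_max] := value_spec A p0 hA.
by have := a_max b Ab; have := b_max a Aa; lra.
Qed.

Lemma Astar_compact_convex A p0 : compact_convex A -> compact_convex (Astar A p0).
Proof.
move=> hA; have [b [Ab b_max]] := attain A p0 hA.
case: hA => [_ [A_closed [[M A_bounded] A_convex]]].
split; first by exists b.
split.
  move=> u a Hu u_cv; split; first by apply: (A_closed u) => // m; exact: (Hu m).1.
  move=> a' Aa'; apply: (@Rle_cv_lim (fun _ => dot p0 a') (fun m => dot p0 (u m))).
  - by move=> m; exact: (Hu m).2.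
  - exact: cv_const.
  - exact: dot_cv.
split; first by exists M => a [Aa _]; exact: A_bounded.
move=> x y t [Ax x_max] [Ay y_max] Ht; split; first exact: A_convex.
by move=> a' Aa'; rewrite dot_comb; have := x_max a' Aa'; have := y_max a' Aa'; nra.
Qed.

Lemma value_Astar A p0 : compact_convex A -> value (Astar A p0) p0 = value A p0.
Proof.
move=> hA; have [[b [Sb <-]] _] := value_spec _ p0 (Astar_compact_convex A p0 hA).
exact: Astar_dot.
Qed.
End ValueFunction.

Definition determines {K : finType} (S : vecK K -> Prop) (a1 : vecK K)
    (F : list (vecK K)) : Prop :=
  forall s, (forall a, In a F -> dot s a = dot s a1) ->
  forall a, S a -> dot s a = dot s a1.

(* Every set of vectors is determined by finitely many of its points: choose
   points of [S] one at a time so that the span of the differences [a - a1]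
   grows; its rank is bounded by [#|K|]. *)
Section DeterminingFamily.
Context {K : finType}.
Local Open Scope ring_scope.

Definition rowv (v : vecK K) : 'rV[R]_#|K| := \row_i v (enum_val i).

Lemma lsum_big {T : Type} (f : T -> R) l : lsum f l = \sum_(x <- l) f x.
Proof. by elim: l => [|x l IH]; rewrite ?big_nil ?big_cons //= IH. Qed.

Lemma dot_mx (s v : vecK K) : dot s v = (rowv v *m (rowv s)^T) 0 0.
Proof.
rewrite [RHS]mxE dotE lsum_big big_enum /= (big_enum_val (fun k => s k * v k)%R) /=.
apply: eq_bigr => i _; rewrite !mxE; exact: GRing.mulrC.
Qed.

Definition diff_space (a1 : vecK K) (F : list (vecK K)) : 'M[R]_#|K| :=
  foldr (fun a M => (rowv (vsub a a1) + M)%MS) 0 F.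

Lemma diff_space_ker s a1 F : (forall a, In a F -> dot s a = dot s a1) ->
  (diff_space a1 F <= kermx (rowv s)^T)%MS.
Proof.
elim: F => [|a F IH] H /=; first exact: sub0mx.
rewrite addsmx_sub IH ?andbT => [|b hb]; last exact: H b (or_intror hb).
apply/sub_kermxP; apply/matrixP => i j; rewrite !ord1 -dot_mx mxE dot_vsub_r.
by rewrite (H a (or_introl erefl)); exact: Rminus_diag.
Qed.

Lemma family_rank_grows (S : vecK K -> Prop) a1 (r : nat) :
  (exists F, (forall a, In a F -> S a) /\ determines S a1 F) \/
  (exists F, (forall a, In a F -> S a) /\ (r <= \rank (diff_space a1 F))%nat).
Proof.
elim: r => [|r [IH|[F [FS rF]]]]; first by right; exists nil.
- by left.
have [Fdet|Fndet] := classic (determines S a1 F); first by left; exists F.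
right.
have [s [Fs [a [Sa sa]]]] : exists s, (forall b, In b F -> dot s b = dot s a1) /\
    exists a, S a /\ dot s a <> dot s a1.
  apply: NNPP => C; apply: Fndet => s Fs a Sa; apply: NNPP => D; apply: C.
  by exists s; split=> //; exists a.
exists (a :: F); split=> [b /= [<-|hb]|]; [exact: Sa | exact: FS |].
have a_new : ~~ (rowv (vsub a a1) <= diff_space a1 F)%MS.
  apply/negP => a_in; have /sub_kermxP := submx_trans a_in (diff_space_ker _ _ _ Fs).
  move/(f_equal (fun M : 'M[R]_1 => M 0 0)); rewrite /= -dot_mx mxE dot_vsub_r => E0.
  by apply: sa; exact: Rminus_diag_uniq E0.
have := mxrank_leqif_sup (addsmxSr (rowv (vsub a a1)) (diff_space a1 F)).
move/ltn_leqif; rewrite addsmx_sub (negbTE a_new) /= => rank_lt.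
exact: leq_ltn_trans rF rank_lt.
Qed.

(* Since the rank is at most [#|K|], the first alternative must hold. *)
Lemma determining_family (S : vecK K -> Prop) a1 :
  exists F, (forall a, In a F -> S a) /\ determines S a1 F.
Proof.
case: (family_rank_grows S a1 #|K|.+1) => // [[F [_ rF]]].
by have := rank_leq_col (diff_space a1 F); rewrite leqNgt rF.
Qed.
End DeterminingFamily.

Definition const_on {K : finType} (L : list (vecK K)) (s : vecK K) : Prop :=
  forall a a', In a L -> In a' L -> dot s a = dot s a'.

Section MeanDeviation.
Context {K : finType}.
Variable L : list (vecK K).
Hypothesis L_nonempty : L <> nil.
Implicit Types (s t : vecK K).

Definition lmean s : R := / INR (size L) * lsum (dot s) L.

Definition mean_dev s : R :=
  / (2 * INR (size L)) * lsum (fun a => Rabs (dot s a - lmean s)) L.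

Lemma size_pos : 0 < INR (size L).
Proof.
case: L L_nonempty => // a l _; rewrite [size _]/= S_INR.
by have := pos_INR (size l); lra.
Qed.

Lemma L_inhabited : exists a0, In a0 L.
Proof. by case: L L_nonempty => // a l _; exists a; left. Qed.

Lemma inv_2size_pos : 0 < / (2 * INR (size L)).
Proof. by apply: Rinv_0_lt_compat; have := size_pos; lra. Qed.

Lemma lmean_const s c : (forall a, In a L -> dot s a = c) -> lmean s = c.
Proof.
move=> H; rewrite /lmean (lsum_eq _ (fun _ => c) _ H) lsum_const.
by field; apply: Rgt_not_eq; exact: size_pos.
Qed.

Lemma lmean_vadd s t : lmean (vadd s t) = lmean s + lmean t.
Proof.
rewrite /lmean -Rmult_plus_distr_l -lsum_plus; congr (_ * _).
by apply: lsum_eq => a _; rewrite dot_vadd_l.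
Qed.

Lemma lmean_vscale c s : lmean (vscale c s) = c * lmean s.
Proof.
rewrite /lmean (lsum_eq _ (fun a => c * dot s a)) => [|a _]; last exact: dot_vscale_l.
by rewrite lsum_scal; ring.
Qed.

Lemma lmean_vsub s t : lmean (vsub s t) = lmean s - lmean t.
Proof.
rewrite /lmean -Rmult_minus_distr_l -lsum_minus; congr (_ * _).
by apply: lsum_eq => a _; rewrite dot_vsub_l.
Qed.

Lemma mean_dev_seminorm : seminorm mean_dev.
Proof.
have hinv := inv_2size_pos.
split=> [s t|c s]; rewrite /mean_dev.
- rewrite -Rmult_plus_distr_l -lsum_plus; apply: Rmult_le_compat_l; first lra.
  apply: lsum_le => a _; rewrite dot_vadd_l lmean_vadd.
  by apply: Rle_trans (Rabs_triang _ _); right; congr Rabs; ring.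
- rewrite (lsum_eq _ (fun a => Rabs c * Rabs (dot s a - lmean s))) => [|a _].
    by rewrite lsum_scal; ring.
  by rewrite dot_vscale_l lmean_vscale -Rabs_mult; congr Rabs; ring.
Qed.

Lemma mean_dev_eq0 s : mean_dev s = 0 <-> const_on L s.
Proof.
have hinv := inv_2size_pos.
split=> [Hs|Hs].
- have sum0 : lsum (fun a => Rabs (dot s a - lmean s)) L = 0.
    by apply: (Rmult_eq_reg_l (/ (2 * INR (size L)))); rewrite ?Rmult_0_r //; lra.
  have at_mean a : In a L -> dot s a = lmean s.
    move=> ha; apply: NNPP => ne; apply: (Rabs_no_R0 (dot s a - lmean s)); first lra.
    exact: lsum_eq0 _ _ (fun a _ => Rabs_pos _) sum0 a ha.
  by move=> a a' ha ha'; rewrite at_mean // at_mean.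
- have [a0 ha0] := L_inhabited.
  rewrite /mean_dev (lmean_const _ (dot s a0)) => [|a ha]; last exact: Hs.
  rewrite (lsum_eq _ (fun _ => 0)) => [|a ha]; last first.
    by rewrite (Hs a a0) // Rminus_diag Rabs_R0.
  by rewrite lsum_const !Rmult_0_r.
Qed.

Lemma mean_dev_shift s t : const_on L t -> mean_dev (vsub s t) = mean_dev s.
Proof.
move=> Ht; have [a0 ha0] := L_inhabited.
rewrite /mean_dev lmean_vsub (lmean_const t (dot t a0)) => [|a ha]; last exact: Ht.
congr (_ * _); apply: lsum_eq => a ha.
by rewrite dot_vsub_l (Ht a a0) //; congr Rabs; ring.
Qed.

Lemma mean_dev_le_max s v : (forall a, In a L -> dot s a <= v) -> lmean s + mean_dev s <= v.
Proof.
move=> Hv; have hn := size_pos; set m := lmean s.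
have m_le : m <= v.
  have := lsum_le _ _ _ Hv; rewrite lsum_const => h.
  rewrite /m /lmean; apply: (Rmult_le_reg_l (INR (size L))) => //.
  by rewrite -Rmult_assoc Rinv_r; lra.
have centered : lsum (fun a => dot s a - m) L = 0.
  by rewrite lsum_minus lsum_const /m /lmean; field; lra.
have : lsum (fun a => Rabs (dot s a - m) + (dot s a - m)) L
    <= lsum (fun _ => 2 * (v - m)) L.
  apply: lsum_le => a ha; have := Hv a ha.
  by case: (Rle_or_lt 0 (dot s a - m)) => h; [rewrite Rabs_pos_eq | rewrite Rabs_left]; lra.
rewrite lsum_plus centered lsum_const /mean_dev -/m => h.
apply: (Rmult_le_reg_l (2 * INR (size L))); first lra.
rewrite Rmult_plus_distr_l -Rmult_assoc Rinv_r; lra.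
Qed.

Section RandomPoints.
Context {Omega : Type} (x : Omega -> vecK K).
Hypothesis x_bounded : forall a, bounded_rv (fun w => dot (x w) a).

Lemma bounded_lmean : bounded_rv (fun w => lmean (x w)).
Proof. by apply: bounded_scal; apply: bounded_lsum. Qed.

Lemma bounded_mean_dev : bounded_rv (fun w => mean_dev (x w)).
Proof.
apply: bounded_scal; apply: bounded_lsum => a.
by apply: bounded_abs; apply: bounded_minus => //; exact: bounded_lmean.
Qed.

Lemma E_lmean E p : expectation E -> (forall a, E (fun w => dot (x w) a) = dot p a) ->
  E (fun w => lmean (x w)) = lmean p.
Proof.
move=> HE Ep; rewrite /lmean (E_scal HE) ?(E_lsum HE) //; last exact: bounded_lsum.
by congr (_ * _); apply: lsum_eq => a _; exact: Ep.
Qed.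
End RandomPoints.
End MeanDeviation.

Lemma const_on_determining {K : finType} (S : vecK K -> Prop) a1 F s :
  S a1 -> (forall a, In a F -> S a) -> determines S a1 F ->
  const_on (a1 :: F) s <-> (forall a a', S a -> S a' -> dot s a = dot s a').
Proof.
move=> Sa1 FS Fdet; split=> [Hs a a' Sa Sa'|Hs a a' ha ha'].
- have to_a1 b : S b -> dot s b = dot s a1.
    by apply: Fdet => // c hc; apply: Hs; [right | left].
  by rewrite !to_a1.
- have inS b : In b (a1 :: F) -> S b by case=> [<-|]; [exact: Sa1 | exact: FS].
  exact: Hs (inS a ha) (inS a' ha').
Qed.

Lemma simplex_coord {K : finType} (p : vecK K) k : in_simplex p -> 0 <= p k <= 1.
Proof.
move=> [p_ge0 p_sum]; split=> //; rewrite -p_sum sumKE.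
exact: lsum_term _ _ _ (fun j _ => p_ge0 j) (In_enum k).
Qed.

Lemma bounded_dot {K : finType} {Omega : Type} (x : Omega -> vecK K) al b :
  (forall w k, Rabs (x w k) <= al) -> bounded_rv (fun w => dot (x w) b).
Proof.
move=> Hx; exists (INR #|K| * (al * norm b)) => w.
by apply: dot_abs_bound => k; [exact: Hx | exact: coord_le_norm].
Qed.

Section ValueOfInformation.
Context {K : finType} {Omega : Type} {E : (Omega -> R) -> R} {p0 : vecK K}
  {q : Omega -> vecK K}.
Hypothesis HE : expectation E.
Hypothesis Hp0 : in_simplex p0.
Hypothesis Hq : info_structure E p0 q.

Lemma shift_coord_bound w k : Rabs (vsub (q w) p0 k) <= 1.
Proof.
have := simplex_coord (q w) k (Hq.1 w); have := simplex_coord p0 k Hp0.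
by rewrite /vsub => ? ?; apply: Rabs_le; lra.
Qed.

Lemma coord_bound w k : Rabs (q w k) <= 1.
Proof. by have := simplex_coord (q w) k (Hq.1 w) => ?; rewrite Rabs_pos_eq; lra. Qed.

Lemma bounded_dot_info b : bounded_rv (fun w => dot (q w) b).
Proof. exact: bounded_dot _ 1 b coord_bound. Qed.

Lemma bounded_value B M : compact_convex B -> (forall b, B b -> norm b <= M) ->
  bounded_rv (fun w => value B (q w)).
Proof.
move=> hB BM; exists (INR #|K| * (1 * M)) => w.
by apply: value_abs_bound => // k; exact: coord_bound.
Qed.

Lemma bounded_norm_shift : bounded_rv (fun w => norm (vsub (q w) p0)).
Proof.
exists (sqrt (INR #|K| * (1 * 1))) => w; rewrite Rabs_pos_eq; last exact: norm_nonneg.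
apply: sqrt_le_1_alt; apply: Rle_trans (Rle_abs _) _.
by apply: dot_abs_bound; exact: shift_coord_bound.
Qed.

Lemma E_dot b : E (fun w => dot (q w) b) = dot p0 b.
Proof.
have coord_bounded k : bounded_rv (fun w => q w k) by exists 1 => w; exact: coord_bound.
have -> : (fun w => dot (q w) b) = (fun w => lsum (fun k => b k * q w k) (enum K)).
  by apply: functional_extensionality => w; rewrite dotE; apply: lsum_eq => k _; ring.
rewrite (E_lsum HE) => [|k]; last exact: bounded_scal (coord_bounded k).
rewrite dotE; apply: lsum_eq => k _; rewrite (E_scal HE) ?(Hq.2 k) //; ring.
Qed.

(* Upper bound: the value function is Lipschitz. *)
Lemma voi_upper B M : compact_convex B -> (forall b, B b -> norm b <= M) ->
  VoI E B p0 q <= INR #|K| * M * E (fun w => norm (vsub (q w) p0)).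
Proof.
move=> hB BM; rewrite /VoI.
have scaled := bounded_scal (INR #|K| * M) _ bounded_norm_shift.
have := E_le HE _ _ (bounded_value B M hB BM)
  (bounded_plus _ _ (bounded_const (value B p0)) scaled)
  (fun w => value_lipschitz B M (q w) p0 hB BM).
rewrite (E_plus HE _ _ (bounded_const _) scaled) (E_const HE).
by rewrite (E_scal HE _ _ bounded_norm_shift); lra.
Qed.

Lemma voi_mono B B' : compact_convex B -> compact_convex B' -> (forall b, B b -> B' b) ->
  value B p0 = value B' p0 -> VoI E B p0 q <= VoI E B' p0 q.
Proof.
move=> hB hB' BB' v0; rewrite /VoI v0.
have [M BM] := hB'.2.2.1.
suff : E (fun w => value B (q w)) <= E (fun w => value B' (q w)) by lra.
apply: (E_le HE); [exact: bounded_value B M hB (fun b Bb => BM b (BB' b Bb)) |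
  exact: bounded_value B' M hB' BM |].
by move=> w; exact: value_mono.
Qed.

Lemma voi_lower B L : compact_convex B -> L <> nil -> (forall a, In a L -> B a) ->
  (forall a, In a L -> dot p0 a = value B p0) ->
  E (fun w => mean_dev L (vsub (q w) p0)) <= VoI E B p0 q.
Proof.
move=> hB L_ne LB L_opt.
have p0_const : const_on L p0 by move=> a a' ha ha'; rewrite !L_opt.
have mean0 : lmean L p0 = value B p0 by apply: lmean_const.
have [M BM] := hB.2.2.1.
have shift_bounded a : bounded_rv (fun w => dot (vsub (q w) p0) a).
  exact: bounded_dot _ 1 a shift_coord_bound.
have pointwise w : lmean L (q w) + mean_dev L (vsub (q w) p0) <= value B (q w).
  rewrite mean_dev_shift //; apply: mean_dev_le_max => // a ha.
  exact: (value_spec B (q w) hB).2 a (LB a ha).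
have b_mean := bounded_lmean L _ bounded_dot_info.
have b_dev := bounded_mean_dev L _ shift_bounded.
have := E_le HE _ _ (bounded_plus _ _ b_mean b_dev) (bounded_value B M hB BM) pointwise.
rewrite (E_plus HE _ _ b_mean b_dev) (E_lmean L q bounded_dot_info E p0 HE E_dot) /VoI.
lra.
Qed.
End ValueOfInformation.

(* Main theorem.  [N] is the mean deviation over a determining family of
   optimal actions, and [C = #|K| M + 1] for a bound [M] on the norms of the
   actions. *)
Theorem theorem3p4 (K : finType) (A : vecK K -> Prop) (p0 : vecK K) :
  compact_convex A -> in_simplex p0 -> full_support p0 ->
  exists (C : R) (N : vecK K -> R),
    0 < C /\ seminorm N /\
    (forall s, N s = 0 <-> indiff_kernel A p0 s) /\
    forall (Omega : Type) (E : (Omega -> R) -> R) (q : Omega -> vecK K),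
      expectation E -> info_structure E p0 q ->
      C * E (fun w => norm (vsub (q w) p0)) >= VoI E A p0 q /\
      VoI E A p0 q >= VoI E (Astar A p0) p0 q /\
      VoI E (Astar A p0) p0 q >= E (fun w => N (vsub (q w) p0)).
Proof.
move=> hA Hp0 _.
have hS := Astar_compact_convex A p0 hA.
have [a1 Sa1] := hS.1.
have [F [FS Fdet]] := determining_family (Astar A p0) a1.
have L_ne : a1 :: F <> nil by [].
have LS a : In a (a1 :: F) -> Astar A p0 a by case=> [<-|]; [exact: Sa1 | exact: FS].
have [M A_bounded] := hA.2.2.1.
have M_ge0 : 0 <= M.
  by have [a Aa] := hA.1; have := A_bounded a Aa; have := norm_nonneg a; lra.
exists (INR #|K| * M + 1), (mean_dev (a1 :: F)).
split; first by have := pos_INR #|K|; nra.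
split; first exact: mean_dev_seminorm.
split=> [s|Omega E q HE Hq].
  by rewrite mean_dev_eq0 //; exact: const_on_determining _ _ _ s Sa1 FS Fdet.
have E_norm_ge0 : 0 <= E (fun w => norm (vsub (q w) p0)).
  by apply: (E_nonneg HE) => [|w]; [exact: bounded_norm_shift Hp0 Hq | exact: norm_nonneg].
split; [|split]; apply: Rle_ge.
- by have := voi_upper HE Hp0 Hq A M hA A_bounded; nra.
- exact: voi_mono HE Hq _ _ hS hA (fun a Sa => Sa.1) (value_Astar A p0 hA).
- apply: (voi_lower HE Hp0 Hq _ _ hS L_ne LS) => a ha.
  by rewrite value_Astar //; exact: Astar_dot (LS a ha).
Qed.
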